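(* Let $S$ be a semidomain that is additively reduced, additively Furstenberg, and satisfies $\mathscr{A}_+(S)=S^\times$, and let $G$ be a torsion-free abelian group. Let $f=s_0x^{g_0}+s_1x^{g_1}+s_2x^{g_2}\in S[G]$ with $s_0,s_1,s_2\in S\setminus\{0\}$ and $g_0>g_1>g_2$ in $G$. If $s_0,s_1,s_2\in S^\times$ then $f$ is irreducible; otherwise $f$ is the sum of two irreducible elements of $S[G]$.
   Context: A semidomain is a subsemiring (containing $0$ and $1$) of an integral domain; $S^\times$ is the unit group of the multiplicative monoid $S\setminus\{0\}$. $S$ is additively reduced if $0$ is the only invertible element of $(S,+)$. An additive atom is a nonzero $a\in S$ with $a=b+c$ implying $b=0$ or $c=0$; $\mathscr{A}_+(S)$ is the set of additive atoms. $S$ is additively Furstenberg if every nonzero $s\in S$ equals $a+t$ with $a\in\mathscr{A}_+(S)$, $t\in S$. $G$ carries a fixed total order compatible with addition. $S[G]$ is the semidomain of formal finite sums $\sum_{g\in G}s_gx^g$ with polynomial operations. $f\in S[G]$ is irreducible if it is nonzero, a nonunit, and $f=pq$ implies $p$ or $q$ is a unit of $S[G]$. *)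

From HB Require Import structures.
From mathcomp Require Import all_boot all_order all_algebra.
Set Implicit Arguments. Unset Strict Implicit. Unset Printing Implicit Defensive.
Import GRing.Theory.
Local Open Scope ring_scope.

(* A semidomain is modelled as a predicate S on an integral domain R,
   containing 0 and 1 and closed under + and *. *)
Definition semidomain (R : idomainType) (S : {pred R}) : Prop :=
  [/\ 0 \in S, 1 \in S,
      (forall a b, a \in S -> b \in S -> a + b \in S) &
      (forall a b, a \in S -> b \in S -> a * b \in S)].

Definition Sunit (R : idomainType) (S : {pred R}) (s : R) : Prop :=
  s \in S /\ exists t, t \in S /\ s * t = 1.

Definition add_reduced (R : idomainType) (S : {pred R}) : Prop :=
  forall a, a \in S -> (exists b, b \in S /\ a + b = 0) -> a = 0.

Definition add_atom (R : idomainType) (S : {pred R}) (a : R) : Prop :=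
  [/\ a \in S, a != 0 &
      forall b c, b \in S -> c \in S -> a = b + c -> b = 0 \/ c = 0].

Definition add_Furstenberg (R : idomainType) (S : {pred R}) : Prop :=
  forall s, s \in S -> s != 0 ->
    exists a t, [/\ add_atom S a, t \in S & s = a + t].

Definition ordered_group (G : zmodType) (lt : rel G) : Prop :=
  [/\ (forall x, ~~ lt x x),
      (forall x y z, lt x y -> lt y z -> lt x z),
      (forall x y, x != y -> lt x y || lt y x) &
      (forall x y z, lt x y -> lt (x + z) (y + z))].

Definition torsion_free (G : zmodType) : Prop :=
  forall (g : G) (n : nat), g *+ n.+1 = 0 -> g = 0.

(* Elements of S[G]: formal finite sums sum_i s_i x^{g_i}, represented by
   lists of pairs (s_i, g_i); two lists denote the same element iff they have
   the same coefficient function. *)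
Section GroupSemiring.
Variables (R : idomainType) (G : zmodType).

Definition coef (l : seq (R * G)) (g : G) : R := \sum_(a <- l | a.2 == g) a.1.
Definition sg_eq (l1 l2 : seq (R * G)) : Prop := forall g, coef l1 g = coef l2 g.
Definition sg_add (l1 l2 : seq (R * G)) := l1 ++ l2.
Definition sg_mul (l1 l2 : seq (R * G)) : seq (R * G) :=
  [seq (a.1 * b.1, a.2 + b.2) | a <- l1, b <- l2].
Definition sg_one : seq (R * G) := [:: (1, 0)].
Definition sg_zero : seq (R * G) := [::].

Variable S : {pred R}.
Definition in_SG (l : seq (R * G)) : bool := all (fun a => a.1 \in S) l.

Definition sg_unit (u : seq (R * G)) : Prop :=
  in_SG u /\ exists v, in_SG v /\ sg_eq (sg_mul u v) sg_one.

Definition sg_irreducible (f : seq (R * G)) : Prop :=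
  [/\ in_SG f, ~ sg_eq f sg_zero, ~ sg_unit f &
      forall p q, in_SG p -> in_SG q -> sg_eq f (sg_mul p q) ->
        sg_unit p \/ sg_unit q].
End GroupSemiring.

From HB Require Import structures.
From mathcomp Require Import all_boot all_order all_algebra.
From mathcomp Require Import ring.
From Stdlib Require Import Classical.
Set Implicit Arguments. Unset Strict Implicit. Unset Printing Implicit Defensive.
Import GRing.Theory.
Local Open Scope ring_scope.

(* Since S is additively reduced, nothing cancels in S[G]: the support of pq
   is the sumset of the supports, so units are monomials, and a monomial
   factor of an element with a unit coefficient is itself a unit.  If f = pq
   with neither factor a monomial, pick x > y in supp p and u > v in supp q:
   then x + u > x + v > y + v and x + u > y + u > y + v lie in supp f.  A
   binomial has no room for three exponents; for the trinomial this forces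
   x + v = y + u = g1, so s1 is a sum of two nonzero elements of S, which is
   impossible when s1 is an atom.  When some s_i is not a unit, Furstenberg
   gives s_i = a + t with a an atom, i.e. a unit, and redistributing a and t
   splits f into two binomials, or a trinomial with unit middle coefficient
   and a binomial, each with a unit coefficient. *)

Section Semidomain.
Variables (R : idomainType) (S : {pred R}).
Hypothesis sdS : semidomain S.

Lemma semidomainD : {in S &, forall a b, a + b \in S}.
Proof. by case: sdS. Qed.

Lemma semidomainM : {in S &, forall a b, a * b \in S}.
Proof. by case: sdS. Qed.

Lemma Sunit_neq0 a : Sunit S a -> a != 0.
Proof. by case=> _ [t [_]]; apply: contra_eqN => /eqP->; rewrite mul0r eq_sym oner_eq0. Qed.

End Semidomain.

Lemma add_Furstenberg_nonunit (R : idomainType) (S : {pred R}) s :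
  add_Furstenberg S -> (forall a, add_atom S a -> Sunit S a) ->
  s \in S -> s != 0 -> ~ Sunit S s ->
  exists a t, [/\ Sunit S a, t \in S, t != 0 & s = a + t].
Proof.
move=> hF atomU sS s0 sN; have [a [t [aA tS sat]]] := hF s sS s0.
exists a, t; split=> //; first exact: atomU.
by apply/eqP => t0; apply: sN; rewrite sat t0 addr0; apply: atomU.
Qed.

Section Coefficients.
Variables (R : idomainType) (G : zmodType).
Implicit Types (p q : seq (R * G)) (g x : G).

(* The zero element counts as a monomial. *)
Definition sg_monomial p := exists x, forall g, coef p g != 0 -> g = x.

Lemma coef_nil g : coef [::] g = 0 :> R.
Proof. exact: big_nil. Qed.

Lemma coef_cons c a p g : coef ((c, a) :: p) g = (if a == g then c else 0) + coef p g.
Proof. by rewrite /coef big_cons /=; case: (a == g); rewrite ?add0r. Qed.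

Lemma coef_sg_add p q g : coef (sg_add p q) g = coef p g + coef q g.
Proof. exact: big_cat. Qed.

Lemma coef_sg_mul p q g : coef (sg_mul p q) g = \sum_(a <- p) a.1 * coef q (g - a.2).
Proof.
rewrite /coef /sg_mul big_mkcond big_allpairs_dep /=.
apply: eq_bigr => a _; rewrite mulr_sumr [RHS]big_mkcond /=.
apply: eq_bigr => b _.
have -> : (a.2 + b.2 == g) = (b.2 == g - a.2) by rewrite [RHS]eq_sym subr_eq addrC eq_sym.
by case: (_ == _); rewrite ?mulr0.
Qed.

Lemma coef_sg_mulC p q g : coef (sg_mul p q) g = coef (sg_mul q p) g.
Proof.
rewrite /coef /sg_mul big_mkcond [RHS]big_mkcond !big_allpairs_dep /= exchange_big /=.
by apply: eq_bigr => a _; apply: eq_bigr => b _; rewrite addrC mulrC.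
Qed.

Lemma coef_sg_mul_split p q g x :
  coef (sg_mul p q) g =
  coef p x * coef q (g - x) + \sum_(a <- p | a.2 != x) a.1 * coef q (g - a.2).
Proof.
rewrite coef_sg_mul (bigID (fun a => a.2 == x)) /= /coef mulr_suml.
by congr (_ + _); apply: eq_bigr => a /eqP ->.
Qed.

Lemma coef_neq0_mem p g : coef p g != 0 -> exists2 a, a \in p & a.2 = g /\ a.1 != 0.
Proof.
move=> pg; have /hasP[a ap /andP[/eqP ag a0]] : has (fun a => (a.2 == g) && (a.1 != 0)) p.
  apply: contraR pg => /hasPn nh; rewrite /coef big1_seq // => a /andP[ag ap].
  by apply/eqP; move: (nh a ap); rewrite ag negbK.
by exists a.
Qed.

Lemma coef_neq0_exponent p g : coef p g != 0 -> g \in [seq a.2 | a <- p].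
Proof. by case/coef_neq0_mem => a ap [<- _]; apply: map_f. Qed.

Lemma coef_uniq_exponents p a :
  uniq [seq b.2 | b <- p] -> a \in p -> coef p a.2 = a.1.
Proof.
elim: p => [|[c b] p IH] //= /andP[bp up]; rewrite inE coef_cons.
have pb0 : coef p b = 0 by apply: contraNeq bp; apply: coef_neq0_exponent.
case/orP => [/eqP->|ap]; first by rewrite eqxx pb0 addr0.
have ba : b != a.2 by apply: contraNneq bp => ->; apply: map_f.
by rewrite (negbTE ba) add0r IH.
Qed.

Lemma sg_monomialN p y z : y != z -> coef p y != 0 -> coef p z != 0 -> ~ sg_monomial p.
Proof. by move=> /eqP yz py pz [x px]; apply: yz; rewrite (px _ py) (px _ pz). Qed.

End Coefficients.

Section ReducedSemidomain.
Variables (R : idomainType) (S : {pred R}) (G : zmodType).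
Hypotheses (sdS : semidomain S) (redS : add_reduced S).
Implicit Types (p q f : seq (R * G)) (g x : G).

Let S_add := semidomainD sdS.
Let S_mul := semidomainM sdS.

Lemma addS_eq0 a b : a \in S -> b \in S -> (a + b == 0) = (a == 0) && (b == 0).
Proof.
move=> aS bS; apply/eqP/andP => [ab0|[/eqP-> /eqP->]]; last by rewrite addr0.
by split; apply/eqP/redS => //; [exists b | exists a; rewrite addrC].
Qed.

Lemma sumS (I : eqType) (r : seq I) (P : pred I) (F : I -> R) :
  {in r, forall i, F i \in S} -> \sum_(i <- r | P i) F i \in S.
Proof.
move=> FS; rewrite big_seq_cond.
apply: (big_ind (fun x : R => x \in S)) => [|a b|i /andP[ir _]]; last exact: FS.
- by case: sdS.
- exact: S_add.
Qed.

Lemma sumS_neq0 (I : eqType) (r : seq I) (P : pred I) (F : I -> R) i :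
  {in r, forall j, F j \in S} -> i \in r -> P i -> F i != 0 ->
  \sum_(j <- r | P j) F j != 0.
Proof.
move=> FS ir Pi Fi0; rewrite (big_rem i ir) Pi /= addS_eq0 ?(negbTE Fi0) ?FS //.
by apply: sumS => j /mem_rem; apply: FS.
Qed.

Lemma coefS p g : in_SG S p -> coef p g \in S.
Proof. by move/allP=> pS; apply: sumS. Qed.

Lemma coef_mem_neq0 p a : in_SG S p -> a \in p -> a.1 != 0 -> coef p a.2 != 0.
Proof. by move/allP=> pS ap a0; rewrite /coef (sumS_neq0 pS ap). Qed.

Lemma coef_sg_mul_neq0 p q g h :
  in_SG S p -> in_SG S q -> coef p g != 0 -> coef q h != 0 ->
  coef (sg_mul p q) (g + h) != 0.
Proof.
move=> pS qS pg qh; rewrite (coef_sg_mul_split _ _ _ g) addS_eq0.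
- by rewrite negb_and (addrC g h) addrK mulf_eq0 negb_or pg qh.
- by rewrite S_mul ?coefS.
- by apply: sumS => a /(allP pS) aS; rewrite S_mul ?coefS.
Qed.

Lemma sg_monomial_coef_mul p q x g :
  in_SG S p -> (forall h, coef p h != 0 -> h = x) ->
  coef (sg_mul p q) g = coef p x * coef q (g - x).
Proof.
move=> pS px; rewrite (coef_sg_mul_split _ _ _ x) big1_seq ?addr0 // => a /andP[ax ap].
apply: contraNeq ax; rewrite mulf_eq0 negb_or => /andP[a0 _].
exact/eqP/px/(coef_mem_neq0 pS ap).
Qed.

Lemma sg_unit_monomial f : sg_unit S f -> sg_monomial f.
Proof.
case=> fS [v [vS fv1]].
have fv_supp g : coef (sg_mul f v) g != 0 -> g = 0.
  by rewrite fv1 /sg_one coef_cons coef_nil addr0; case: (0 =P g) => [<-|_]; rewrite ?eqxx.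
have [k vk] : exists k, coef v k != 0.
  apply: NNPP => v0; move: (fv1 0); rewrite coef_sg_mul big1 => [|a _].
    by rewrite /sg_one coef_cons coef_nil eqxx addr0 => /eqP; rewrite eq_sym oner_eq0.
  case: (coef v (0 - a.2) =P 0) => [->|/eqP vk]; first by rewrite mulr0.
  by case: v0; exists (0 - a.2).
exists (- k) => g fg; apply/eqP; rewrite -subr_eq0 opprK.
exact/eqP/fv_supp/(coef_sg_mul_neq0 fS vS fg vk).
Qed.

Lemma sg_monomial_factor_unit f p q g :
  in_SG S p -> in_SG S q -> sg_eq f (sg_mul p q) -> Sunit S (coef f g) ->
  sg_monomial p -> sg_unit S p.
Proof.
move=> pS qS fpq [_ [t [tS ft1]]] [x px]; split=> //.
exists [:: (coef q (g - x) * t, - x)]; split; first by rewrite /in_SG /= S_mul ?coefS.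
move=> h; rewrite (sg_monomial_coef_mul _ _ pS px) !coef_cons !coef_nil !addr0.
have -> : (- x == h - x) = (0 == h) by rewrite eq_sym subr_eq addNr eq_sym.
case: (0 == h); last by rewrite mulr0.
by rewrite mulrA -(sg_monomial_coef_mul q g pS px) -fpq.
Qed.

Lemma sg_irreducible_monomial_factor f g :
  in_SG S f -> ~ sg_monomial f -> Sunit S (coef f g) ->
  (forall p q, in_SG S p -> in_SG S q -> sg_eq f (sg_mul p q) ->
     sg_monomial p \/ sg_monomial q) ->
  sg_irreducible S f.
Proof.
move=> fS fN fg monomial_factor; split=> // [f0|/sg_unit_monomial //|p q pS qS fpq].
  by apply: fN; exists 0 => h; rewrite f0 coef_nil eqxx.
have fqp : sg_eq f (sg_mul q p) by move=> h; rewrite fpq coef_sg_mulC.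
case: (monomial_factor p q pS qS fpq) => [pm|qm].
  by left; apply: (sg_monomial_factor_unit pS qS fpq fg).
by right; apply: (sg_monomial_factor_unit qS pS fqp fg).
Qed.

End ReducedSemidomain.

Section OrderedGroup.
Variables (G : zmodType) (lt : rel G).
Hypothesis ord : ordered_group lt.

Let lt_irr x : lt x x = false. Proof. by case: ord => irr _ _ _; apply: negbTE. Qed.
Let lt_trans y x z : lt x y -> lt y z -> lt x z. Proof. by case: ord => _ + _ _; apply. Qed.

Lemma lt_asym x y : lt x y -> lt y x -> False.
Proof. by move=> xy /(lt_trans xy); rewrite lt_irr. Qed.

Lemma lt_neq x y : lt x y -> x != y.
Proof. by apply: contraPneq => ->; rewrite lt_irr. Qed.

Lemma lt_add2r z x y : lt x y -> lt (x + z) (y + z).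
Proof. by case: ord => _ _ _; apply. Qed.

Lemma lt_add2l z x y : lt x y -> lt (z + x) (z + y).
Proof. by rewrite ![z + _]addrC; apply: lt_add2r. Qed.

Lemma lt_chain_uniq c1 c2 c3 : lt c2 c1 -> lt c3 c2 -> uniq [:: c1; c2; c3].
Proof.
move=> h21 h32; rewrite /= !inE !negb_or andbT.
rewrite (eq_sym c1 c2) (eq_sym c1 c3) (eq_sym c2 c3).
by rewrite (lt_neq h21) (lt_neq h32) (lt_neq (lt_trans h32 h21)).
Qed.

Lemma lt_chain_middle g0 g1 g2 c1 c2 c3 :
  lt g1 g0 -> lt g2 g1 -> lt c2 c1 -> lt c3 c2 ->
  c1 \in [:: g0; g1; g2] -> c2 \in [:: g0; g1; g2] -> c3 \in [:: g0; g1; g2] ->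
  c2 = g1.
Proof.
move=> h10 h21 hc21 hc32 c1g c2g c3g; have h20 := lt_trans h21 h10.
move: c2g hc21 hc32; rewrite !inE => /or3P[]/eqP-> // hc1 hc3; exfalso.
  move: c1g hc1; rewrite !inE => /or3P[]/eqP->; rewrite ?lt_irr //.
  - exact: lt_asym h10.
  - exact: lt_asym h20.
move: c3g hc3; rewrite !inE => /or3P[]/eqP->; rewrite ?lt_irr //.
- exact: lt_asym h20.
- exact: lt_asym h21.
Qed.

Lemma nonmonomial_lt (R : idomainType) (p : seq (R * G)) :
  ~ sg_monomial p -> exists x y, [/\ lt y x, coef p x != 0 & coef p y != 0].
Proof.
move=> pN; have [x px] : exists x, coef p x != 0.
  by apply: NNPP => p0; apply: pN; exists 0 => g pg; case: p0; exists g.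
have [y yx py] : exists2 y, y != x & coef p y != 0.
  apply: NNPP => p1; apply: pN; exists x => g pg.
  by apply: NNPP => gx; apply: p1; exists g => //; apply/eqP.
by case: ord => _ _ + _ => /(_ _ _ yx) /orP[]; [exists x, y | exists y, x].
Qed.

End OrderedGroup.

Section Irreducibility.
Variables (R : idomainType) (S : {pred R}) (G : zmodType) (lt : rel G).
Hypotheses (sdS : semidomain S) (redS : add_reduced S) (ord : ordered_group lt).
Implicit Types (p q f : seq (R * G)).

Lemma sg_irreducible_ordered f g :
  in_SG S f -> ~ sg_monomial f -> Sunit S (coef f g) ->
  (forall p q x y u v, in_SG S p -> in_SG S q -> sg_eq f (sg_mul p q) ->
     lt y x -> lt v u -> coef p x != 0 -> coef p y != 0 ->
     coef q u != 0 -> coef q v != 0 -> False) ->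
  sg_irreducible S f.
Proof.
move=> fS fN fg no_factor; apply: (sg_irreducible_monomial_factor sdS redS fS fN fg).
move=> p q pS qS fpq.
case: (classic (sg_monomial p)) => [|/(nonmonomial_lt ord) [x [y [yx px py]]]].
  by left.
case: (classic (sg_monomial q)) => [|/(nonmonomial_lt ord) [u [v [vu qu qv]]]].
  by right.
by case: (no_factor p q x y u v).
Qed.

Lemma sg_mul_supp_exponents f p q g h :
  in_SG S p -> in_SG S q -> sg_eq f (sg_mul p q) ->
  coef p g != 0 -> coef q h != 0 -> g + h \in [seq a.2 | a <- f].
Proof.
move=> pS qS fpq pg qh; apply: coef_neq0_exponent.
by rewrite fpq (coef_sg_mul_neq0 sdS redS).
Qed.

Lemma binomial_irreducible c d (a b : G) :
  Sunit S c -> d \in S -> d != 0 -> a != b -> sg_irreducible S [:: (c, a); (d, b)].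
Proof.
move=> cU dS d0 ab; set f := [:: (c, a); (d, b)].
have uf : uniq [seq e.2 | e <- f] by rewrite /= inE ab.
have fa : coef f a = c := coef_uniq_exponents uf (mem_head (c, a) _).
have fb : coef f b = d.
  by apply: (coef_uniq_exponents (a := (d, b)) uf); rewrite !inE eqxx orbT.
apply: (sg_irreducible_ordered (g := a)); rewrite ?fa //.
- by rewrite /in_SG /= cU.1 dS.
- by apply: (sg_monomialN ab); rewrite ?fa ?fb ?(Sunit_neq0 cU).
move=> p q x y u v pS qS fpq yx vu px py qu qv.
have supp := sg_mul_supp_exponents pS qS fpq.
have chain := lt_chain_uniq ord (lt_add2l ord x vu) (lt_add2r ord v yx).
suff /(uniq_leq_size chain) : {subset [:: x + u; x + v; y + v] <= [:: a; b]} by [].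
by apply/allP; rewrite /= !supp.
Qed.

Lemma trinomial_irreducible s0 s1 s2 g0 g1 g2 :
  s0 \in S -> s2 \in S -> s0 != 0 -> s2 != 0 -> lt g1 g0 -> lt g2 g1 ->
  Sunit S s1 -> add_atom S s1 ->
  sg_irreducible S [:: (s0, g0); (s1, g1); (s2, g2)].
Proof.
move=> s0S s2S s00 s20 h10 h21 s1U [s1S s10 s1_atom].
set f := [:: (s0, g0); (s1, g1); (s2, g2)].
have uf : uniq [seq e.2 | e <- f] := lt_chain_uniq ord h10 h21.
have f0 : coef f g0 = s0 := coef_uniq_exponents uf (mem_head (s0, g0) _).
have f1 : coef f g1 = s1.
  by apply: (coef_uniq_exponents (a := (s1, g1)) uf); rewrite !inE eqxx orbT.
apply: (sg_irreducible_ordered (g := g1)); rewrite ?f1 //.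
- by rewrite /in_SG /= s0S s1S s2S.
- by apply: (sg_monomialN (lt_neq ord h10)); rewrite ?f0 ?f1.
move=> p q x y u v pS qS fpq yx vu px py qu qv.
have supp := sg_mul_supp_exponents pS qS fpq.
have middle := lt_chain_middle ord h10 h21.
have xv : x + v = g1.
  by apply: (middle _ _ _ (lt_add2l ord x vu) (lt_add2r ord v yx)); apply: supp.
have yu : y + u = g1.
  by apply: (middle _ _ _ (lt_add2r ord u yx) (lt_add2l ord y vu)); apply: supp.
have termS e : e \in p -> e.1 * coef q (g1 - e.2) \in S.
  by move=> /(allP pS) eS; rewrite (semidomainM sdS) ?(coefS sdS).
have leadS : coef p x * coef q (g1 - x) \in S.
  by rewrite (semidomainM sdS) ?(coefS sdS).
have lead0 : coef p x * coef q (g1 - x) != 0.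
  by rewrite -xv (addrC x v) addrK mulf_neq0.
have [e ep [ey e0]] := coef_neq0_mem py.
have rest0 : \sum_(e <- p | e.2 != x) e.1 * coef q (g1 - e.2) != 0.
  apply: (sumS_neq0 sdS redS termS ep); first by rewrite ey (lt_neq ord yx).
  by rewrite ey -yu (addrC y u) addrK mulf_neq0.
have restS := sumS sdS (fun e => e.2 != x) termS.
have := fpq g1; rewrite f1 (coef_sg_mul_split _ _ _ x).
by case/(s1_atom _ _ leadS restS) => /eqP; rewrite ?(negbTE lead0) ?(negbTE rest0).
Qed.

Lemma trinomial_sum_irreducible s0 s1 s2 g0 g1 g2 :
  add_Furstenberg S -> (forall a, add_atom S a <-> Sunit S a) ->
  s0 \in S -> s1 \in S -> s2 \in S -> s0 != 0 -> s1 != 0 -> s2 != 0 ->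
  lt g1 g0 -> lt g2 g1 -> ~ (Sunit S s0 /\ Sunit S s1 /\ Sunit S s2) ->
  exists p q, [/\ sg_irreducible S p, sg_irreducible S q &
                  sg_eq [:: (s0, g0); (s1, g1); (s2, g2)] (sg_add p q)].
Proof.
move=> hF atomU s0S s1S s2S n0 n1 n2 h10 h21 nU.
have decompose s : s \in S -> s != 0 -> ~ Sunit S s ->
    exists a t, [/\ Sunit S a, t \in S, t != 0 & s = a + t].
  by apply: add_Furstenberg_nonunit => // a /atomU.
have := lt_chain_uniq ord h10 h21.
rewrite /= !inE !negb_or => /and3P[/andP[n01 n02] n12 _].
have [n10 n20] : g1 != g0 /\ g2 != g0 by rewrite !(eq_sym _ g0).
case: (classic (Sunit S s1)) => [s1U|/(decompose _ s1S n1) [a1 [t1 [a1U t1S t10 ->]]]];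
  case: (classic (Sunit S s0)) => [s0U|/(decompose _ s0S n0) [a0 [t0 [a0U t0S t00 ->]]]].
- have /(decompose _ s2S n2) [a [t [aU tS t0 ->]]] : ~ Sunit S s2 by move=> s2U; apply: nU.
  exists [:: (a, g2); (s0, g0)], [:: (s1, g1); (t, g2)].
  split; [by apply: binomial_irreducible | by apply: binomial_irreducible |].
  by move=> g; rewrite coef_sg_add !coef_cons !coef_nil;
    case: (g0 == g); case: (g1 == g); case: (g2 == g); ring.
- exists [:: (s1, g1); (t0, g0)], [:: (a0, g0); (s2, g2)].
  split; [by apply: binomial_irreducible | by apply: binomial_irreducible |].
  by move=> g; rewrite coef_sg_add !coef_cons !coef_nil;
    case: (g0 == g); case: (g1 == g); case: (g2 == g); ring.
- exists [:: (s0, g0); (t1, g1)], [:: (a1, g1); (s2, g2)].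
  split; [by apply: binomial_irreducible | by apply: binomial_irreducible |].
  by move=> g; rewrite coef_sg_add !coef_cons !coef_nil;
    case: (g0 == g); case: (g1 == g); case: (g2 == g); ring.
- exists [:: (t0, g0); (a1, g1); (s2, g2)], [:: (a0, g0); (t1, g1)].
  split; [by apply: trinomial_irreducible => //; apply/atomU |
         by apply: binomial_irreducible |].
  by move=> g; rewrite coef_sg_add !coef_cons !coef_nil;
    case: (g0 == g); case: (g1 == g); case: (g2 == g); ring.
Qed.

End Irreducibility.

Theorem lemma3p5 (R : idomainType) (S : {pred R}) (G : zmodType) (lt : rel G)
  (s0 s1 s2 : R) (g0 g1 g2 : G) :
  semidomain S -> add_reduced S -> add_Furstenberg S ->
  (forall a, add_atom S a <-> Sunit S a) ->
  torsion_free G -> ordered_group lt ->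
  s0 \in S -> s1 \in S -> s2 \in S -> s0 != 0 -> s1 != 0 -> s2 != 0 ->
  lt g1 g0 -> lt g2 g1 ->
  let f := [:: (s0, g0); (s1, g1); (s2, g2)] in
  ((Sunit S s0 /\ Sunit S s1 /\ Sunit S s2) -> sg_irreducible S f) /\
  (~ (Sunit S s0 /\ Sunit S s1 /\ Sunit S s2) ->
     exists p q, [/\ sg_irreducible S p, sg_irreducible S q &
                     sg_eq f (sg_add p q)]).
Proof.
move=> sdS redS hF atomU _ ord s0S s1S s2S n0 n1 n2 h10 h21 f; split.
  case=> _ [s1U _]; apply: (trinomial_irreducible sdS redS ord) => //.
  exact/atomU.
exact: (trinomial_sum_irreducible sdS redS ord).
Qed.
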